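(* Let $I\subseteq\mathbb{R}_-$ be a nonempty interval containing $0$ and let $f\colon I^n\to\mathbb{R}$. The following are equivalent: (i) $f$ is comonotonically modular; (ii) $f$ is invariant under horizontal max-differences; (iii) there exists $g\colon I^n\to\mathbb{R}$ such that for every $\sigma\in S_n$ and every $\mathbf{x}\in I^n_\sigma$, $$f(\mathbf{x})=g(\mathbf{0})+\sum_{i\in[n]}\Big(g\big(x_{\sigma(i)}\mathbf{1}_{A^\downarrow_\sigma(i)}\big)-g\big(x_{\sigma(i)}\mathbf{1}_{A^\downarrow_\sigma(i-1)}\big)\Big).$$ Moreover, in this case one can take $g=f$ in (iii).
   Context: Notation: $[n]=\{1,\ldots,n\}$; $S_n$ is the set of permutations of $[n]$; $\mathbf{1}_A$ is the indicator tuple of $A\subseteq[n]$, $\mathbf{0}=\mathbf{1}_\varnothing$. For $\sigma\in S_n$, $\mathbb{R}^n_\sigma=\{\mathbf{x}: x_{\sigma(1)}\leq\cdots\leq x_{\sigma(n)}\}$, $I^n_\sigma=I^n\cap\mathbb{R}^n_\sigma$, $A^\downarrow_\sigma(i)=\{\sigma(1),\ldots,\sigma(i)\}$, $A^\downarrow_\sigma(0)=\varnothing$. $\wedge,\vee$ denote componentwise min and max; $\mathbf{x}\vee c$ is the tuple with components $\max(x_i,c)$. Two tuples $\mathbf{x},\mathbf{x}'\in I^n$ are comonotonic if $\mathbf{x},\mathbf{x}'\in I^n_\sigma$ for some $\sigma\in S_n$. A function $f\colon I^n\to\mathbb{R}$ is comonotonically modular if $f(\mathbf{x})+f(\mathbf{x}')=f(\mathbf{x}\wedge\mathbf{x}')+f(\mathbf{x}\vee\mathbf{x}')$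 for all comonotonic $\mathbf{x},\mathbf{x}'\in I^n$. For $c\leq 0$, $[\mathbf{x}]^c$ is the tuple whose $i$th component is $0$ if $x_i\geq c$ and $x_i$ otherwise. For $I\subseteq\mathbb{R}_-$, $f$ is invariant under horizontal max-differences if $f(\mathbf{x})-f(\mathbf{x}\vee c)=f([\mathbf{x}]^c)-f([\mathbf{x}]^c\vee c)$ for all $\mathbf{x}\in I^n$, $c\in I$. *)

From HB Require Import structures.
From mathcomp Require Import all_boot all_order all_algebra all_fingroup.
Set Implicit Arguments. Unset Strict Implicit. Unset Printing Implicit Defensive.
Import Order.TTheory GRing.Theory Num.Theory.
Local Open Scope ring_scope.

Section Defs.
Variables (R : realFieldType) (n : nat).

Definition tup := {ffun 'I_n -> R}.

Definition neg_interval_with_0 (I : R -> Prop) : Prop :=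
  [/\ (forall a b c, I a -> I c -> a <= b -> b <= c -> I b),
      I 0 & (forall x, I x -> x <= 0)].

Definition inIn (I : R -> Prop) (x : tup) : Prop := forall i, I (x i).

Definition in_sigma (s : 'S_n) (x : tup) : Prop :=
  forall i j : 'I_n, (i <= j)%N -> x (s i) <= x (s j).

Definition comonotonic (I : R -> Prop) (x y : tup) : Prop :=
  exists s : 'S_n, [/\ inIn I x, inIn I y, in_sigma s x & in_sigma s y].

Definition tmin (x y : tup) : tup := [ffun i => Num.min (x i) (y i)].
Definition tmax (x y : tup) : tup := [ffun i => Num.max (x i) (y i)].
Definition tmaxc (x : tup) (c : R) : tup := [ffun i => Num.max (x i) c].
Definition cutc (x : tup) (c : R) : tup := [ffun i => if c <= x i then 0 else x i].

Definition comonotonically_modular (I : R -> Prop) (f : tup -> R) : Prop :=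
  forall x y, comonotonic I x y -> f x + f y = f (tmin x y) + f (tmax x y).

Definition horizontal_maxdiff_invariant (I : R -> Prop) (f : tup -> R) : Prop :=
  forall x c, inIn I x -> I c ->
    f x - f (tmaxc x c) = f (cutc x c) - f (tmaxc (cutc x c) c).

(* A^down_sigma(k) = {sigma(1),...,sigma(k)}  (0-based: sigma j for j < k) *)
Definition Adown (s : 'S_n) (k : nat) : {set 'I_n} := [set s j | j : 'I_n & (j < k)%N].

Definition sind (a : R) (A : {set 'I_n}) : tup := [ffun i => if i \in A then a else 0].

Definition tzero : tup := [ffun=> 0].

(* The representation (iii): index i : 'I_n corresponds to i+1 in [n] *)
Definition lovasz_repr (g : tup -> R) (s : 'S_n) (x : tup) : R :=
  g tzero + \sum_(i < n) (g (sind (x (s i)) (Adown s i.+1)) - g (sind (x (s i)) (Adown s i))).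

Definition represented_by (I : R -> Prop) (f g : tup -> R) : Prop :=
  forall (s : 'S_n) (x : tup), inIn I x -> in_sigma s x -> f x = lovasz_repr g s x.

End Defs.

From HB Require Import structures.
From mathcomp Require Import all_boot all_order all_algebra all_fingroup.
From mathcomp Require Import lra.
Import Order.TTheory GRing.Theory Num.Theory.
Local Open Scope ring_scope.
Set Implicit Arguments. Unset Strict Implicit.

(* On each cone R^n_sigma the formula (iii) is a constant plus a sum of functions
   of the single coordinates x_{sigma(i)}.  Since min, max, max with c and [.]^c act
   coordinatewise and preserve the cone, (iii) implies both (i) and (ii).
   Conversely, write x as the telescoping chain of its restrictions to
   A(k) = A^down_sigma(k), for k = 0..n, and let c = x_{sigma(k)}.  By (i), applied to
   the comonotonic pair (x 1_{A(k)}, c 1_{A(k+1)}) whose min and max are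
   x 1_{A(k+1)} and c 1_{A(k)}, the k-th increment of the chain equals
   f(c 1_{A(k+1)}) - f(c 1_{A(k)}); by (ii) with this c the same holds, since
   taking the max with c turns x 1_{A(j)} into c 1_{A(j)} for j = k, k+1, while
   [.]^c maps both to the same tuple.  Summing the increments gives (iii) with g = f. *)

Lemma addrKB (V : zmodType) (a b c : V) : a + b - (a + c) = b - c.
Proof. by rewrite opprD addrACA subrr add0r. Qed.

Section ComonotonicModularity.
Variables (R : realFieldType) (n : nat).
Implicit Types (I : R -> Prop) (f g : tup R n -> R) (x y : tup R n) (s : 'S_n)
  (A : {set 'I_n}) (c : R) (k : nat).

Definition restrict x A : tup R n :=
  [ffun j => if j \in A then x j else 0].

Lemma in_sigma_exists x : exists s, in_sigma s x.
Proof.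
pose le_at := fun i j : 'I_n => x i <= x j.
pose l := sort le_at (enum 'I_n).
have size_l : size l = n by rewrite size_sort size_enum_ord.
have size_lE : size l == n by rewrite size_l.
pose t := Tuple size_lE.
have t_inj : injective (tnth t).
  move=> i j; rewrite !(tnth_nth i) /= => /eqP.
  by rewrite nth_uniq ?size_l ?ltn_ord ?sort_uniq ?enum_uniq // => /eqP /val_inj.
exists (perm t_inj) => i j le_ij; rewrite !permE !(tnth_nth i) /=.
have le_sorted : sorted le_at l by apply: sort_sorted => a b; apply: le_total.
apply: (sorted_leq_nth _ _ i le_sorted); rewrite ?inE ?size_l ?ltn_ord //.
- by move=> a b c; apply: le_trans.
- by move=> a; apply: lexx.
Qed.

Lemma mem_Adown s k i : (s i \in Adown s k) = (i < k)%N.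
Proof. by rewrite mem_imset ?inE //; apply: perm_inj. Qed.

Lemma Adown_succ s (k : 'I_n) : Adown s k.+1 = s k |: Adown s k.
Proof.
apply/setP => j; rewrite -(permKV s j) in_setU1 !mem_Adown (inj_eq perm_inj).
by rewrite ltnS leq_eqVlt.
Qed.

Lemma le_Adown s x m (k : 'I_n) : in_sigma s x -> (m <= k.+1)%N ->
  {in Adown s m, forall j, x j <= x (s k)}.
Proof.
move=> sx le_mk j; rewrite -(permKV s j) mem_Adown => lt_jm.
by apply: sx; rewrite -ltnS (leq_trans lt_jm).
Qed.

Lemma restrict0 s x : restrict x (Adown s 0) = tzero R n.
Proof. by apply/ffunP => j; rewrite !ffunE -(permKV s j) mem_Adown. Qed.

Lemma restrictT s x : restrict x (Adown s n) = x.
Proof. by apply/ffunP => j; rewrite !ffunE -(permKV s j) mem_Adown ltn_ord. Qed.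

Lemma inIn_tmin I x y : inIn I x -> inIn I y -> inIn I (tmin x y).
Proof. by move=> Ix Iy i; rewrite ffunE; case: leP. Qed.

Lemma inIn_tmax I x y : inIn I x -> inIn I y -> inIn I (tmax x y).
Proof. by move=> Ix Iy i; rewrite ffunE; case: leP. Qed.

Lemma inIn_tmaxc I x c : inIn I x -> I c -> inIn I (tmaxc x c).
Proof. by move=> Ix Ic i; rewrite ffunE; case: leP. Qed.

Lemma inIn_cutc I x c : I 0 -> inIn I x -> inIn I (cutc x c).
Proof. by move=> I0 Ix i; rewrite ffunE; case: ifP. Qed.

Lemma inIn_restrict I x A : I 0 -> inIn I x -> inIn I (restrict x A).
Proof. by move=> I0 Ix i; rewrite ffunE; case: ifP. Qed.

Lemma inIn_sind I c A : I 0 -> I c -> inIn I (sind c A).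
Proof. by move=> I0 Ic i; rewrite ffunE; case: ifP. Qed.

Lemma in_sigma_tmin s x y : in_sigma s x -> in_sigma s y -> in_sigma s (tmin x y).
Proof.
by move=> sx sy i j le_ij; rewrite !ffunE le_min !ge_min sx ?sy ?orbT.
Qed.

Lemma in_sigma_tmax s x y : in_sigma s x -> in_sigma s y -> in_sigma s (tmax x y).
Proof.
by move=> sx sy i j le_ij; rewrite !ffunE ge_max !le_max sx ?sy ?orbT.
Qed.

Lemma in_sigma_tmaxc s x c : in_sigma s x -> in_sigma s (tmaxc x c).
Proof. by move=> sx i j le_ij; rewrite !ffunE ge_max !le_max sx ?lexx ?orbT. Qed.

Lemma in_sigma_cutc s x c :
  (forall i, x i <= 0) -> in_sigma s x -> in_sigma s (cutc x c).
Proof.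
move=> x_le0 sx i j le_ij; rewrite !ffunE.
case: ifP => c_le_i; case: ifP => c_le_j //; last exact: sx.
by rewrite (le_trans c_le_i (sx i j le_ij)) in c_le_j.
Qed.

Lemma in_sigma_restrict s x k :
  (forall i, x i <= 0) -> in_sigma s x -> in_sigma s (restrict x (Adown s k)).
Proof.
move=> x_le0 sx i j le_ij; rewrite !ffunE !mem_Adown.
case: (ltnP i k) => ik; case: (ltnP j k) => jk //; first exact: sx.
by move: (leq_trans ik le_ij); rewrite leqNgt jk.
Qed.

Lemma in_sigma_sind s c k : c <= 0 -> in_sigma s (sind c (Adown s k)).
Proof.
move=> c_le0 i j le_ij; rewrite !ffunE !mem_Adown.
case: (ltnP i k) => ik; case: (ltnP j k) => jk //.
by move: (leq_trans ik le_ij); rewrite leqNgt jk.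
Qed.

Lemma lovasz_repr_tmin_tmax g s x y :
  lovasz_repr g s (tmin x y) + lovasz_repr g s (tmax x y) =
  lovasz_repr g s x + lovasz_repr g s y.
Proof.
rewrite /lovasz_repr addrACA -big_split [RHS]addrACA -big_split /=.
congr (_ + _); apply: eq_bigr => i _; rewrite !ffunE.
by case: leP => _; rewrite // addrC.
Qed.

Lemma lovasz_repr_maxdiff g s x c : c <= 0 ->
  lovasz_repr g s x - lovasz_repr g s (tmaxc x c) =
  lovasz_repr g s (cutc x c) - lovasz_repr g s (tmaxc (cutc x c) c).
Proof.
move=> c_le0; rewrite /lovasz_repr !addrKB -!sumrB; apply: eq_bigr => i _.
rewrite !ffunE; case: (leP c (x (s i))) => [c_le_x | x_lt_c].
  by rewrite (max_l c_le0) !subrr.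
by rewrite (max_r (ltW x_lt_c)).
Qed.

Lemma represented_comonotonically_modular I f g :
  represented_by I f g -> comonotonically_modular I f.
Proof.
move=> rep x y [s [Ix Iy sx sy]].
rewrite (rep s x) // (rep s y) // (rep s _ (inIn_tmin Ix Iy) (in_sigma_tmin sx sy)).
by rewrite (rep s _ (inIn_tmax Ix Iy) (in_sigma_tmax sx sy)) lovasz_repr_tmin_tmax.
Qed.

Lemma represented_maxdiff_invariant I f g : neg_interval_with_0 I ->
  represented_by I f g -> horizontal_maxdiff_invariant I f.
Proof.
move=> [_ I0 I_le0] rep x c Ix Ic.
have [s sx] := in_sigma_exists x.
have x_le0 i : x i <= 0 by apply: I_le0.
have Icut := inIn_cutc c I0 Ix.
have scut := in_sigma_cutc c x_le0 sx.
rewrite (rep s x) // (rep s _ (inIn_tmaxc Ix Ic) (in_sigma_tmaxc c sx)).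
rewrite (rep s _ Icut scut) (rep s _ (inIn_tmaxc Icut Ic) (in_sigma_tmaxc c scut)).
exact: lovasz_repr_maxdiff (I_le0 c Ic).
Qed.

Lemma tmaxc_restrict x A c : c <= 0 -> {in A, forall j, x j <= c} ->
  tmaxc (restrict x A) c = sind c A.
Proof.
move=> c_le0 xA_le; apply/ffunP => j; rewrite !ffunE.
by case: ifP => jA; [rewrite max_r ?xA_le | rewrite max_l].
Qed.

Lemma cutc_restrict_setU1 x A j : x j <= 0 ->
  cutc (restrict x (j |: A)) (x j) = cutc (restrict x A) (x j).
Proof.
move=> xj_le0; apply/ffunP => i; rewrite !ffunE in_setU1.
by case: eqP => [-> | _] //=; case: (j \in A); rewrite lexx ?xj_le0.
Qed.

Lemma tmin_restrict_sind x A j : x j <= 0 -> {in A, forall a, x a <= x j} ->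
  tmin (restrict x A) (sind (x j) (j |: A)) = restrict x (j |: A).
Proof.
move=> xj_le0 xA_le; apply/ffunP => i; rewrite !ffunE in_setU1.
case: eqP => [-> | _] /=; first by case: ifP => _; rewrite ?minxx ?min_r.
by case: ifP => iA; rewrite ?min_l ?xA_le ?minxx.
Qed.

Lemma tmax_restrict_sind x A j : x j <= 0 -> {in A, forall a, x a <= x j} ->
  tmax (restrict x A) (sind (x j) (j |: A)) = sind (x j) A.
Proof.
move=> xj_le0 xA_le; apply/ffunP => i; rewrite !ffunE in_setU1.
case: eqP => [-> | _] /=; first by case: ifP => _; rewrite ?maxxx ?max_l.
by case: ifP => iA; rewrite ?max_r ?xA_le ?maxxx.
Qed.

Definition chain_increments_eq I f : Prop :=
  forall s x (k : 'I_n), inIn I x -> in_sigma s x ->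
  f (restrict x (Adown s k.+1)) - f (restrict x (Adown s k)) =
  f (sind (x (s k)) (Adown s k.+1)) - f (sind (x (s k)) (Adown s k)).

Lemma maxdiff_chain_increments_eq I f : neg_interval_with_0 I ->
  horizontal_maxdiff_invariant I f -> chain_increments_eq I f.
Proof.
move=> [_ I0 I_le0] maxdiff s x k Ix sx.
have Ic := Ix (s k); have c_le0 := I_le0 _ Ic.
have E1 := maxdiff _ _ (inIn_restrict (Adown s k.+1) I0 Ix) Ic.
have E0 := maxdiff _ _ (inIn_restrict (Adown s k) I0 Ix) Ic.
rewrite (tmaxc_restrict c_le0 (le_Adown sx (leqnn k.+1))) in E1.
rewrite (tmaxc_restrict c_le0 (le_Adown sx (leqnSn k))) in E0.
rewrite Adown_succ cutc_restrict_setU1 // -Adown_succ -E0 in E1.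
lra.
Qed.

Lemma modular_chain_increments_eq I f : neg_interval_with_0 I ->
  comonotonically_modular I f -> chain_increments_eq I f.
Proof.
move=> [_ I0 I_le0] modular s x k Ix sx.
have Ic := Ix (s k); have c_le0 := I_le0 _ Ic.
have x_le0 i : x i <= 0 by apply: I_le0.
have/modular : comonotonic I (restrict x (Adown s k)) (sind (x (s k)) (Adown s k.+1)).
  exists s; split; [exact: inIn_restrict | exact: inIn_sind |
                    exact: in_sigma_restrict | exact: in_sigma_sind].
have le_c := le_Adown sx (leqnSn k).
rewrite Adown_succ tmin_restrict_sind // tmax_restrict_sind // -Adown_succ.
lra.
Qed.

Lemma chain_increments_eq_represented I f :
  chain_increments_eq I f -> represented_by I f f.
Proof.
move=> increment s x Ix sx; rewrite /lovasz_repr.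
under eq_bigr => k _ do rewrite -increment //.
pose chain k := f (restrict x (Adown s k)).
rewrite -(big_mkord xpredT (fun k => chain k.+1 - chain k)) telescope_sumr //.
by rewrite /chain restrictT restrict0 addrC subrK.
Qed.

End ComonotonicModularity.

Unset Implicit Arguments.

Theorem theorem10 (R : realFieldType) (n : nat) (I : R -> Prop)
    (f : tup R n -> R) (hI : neg_interval_with_0 I) :
  [/\ comonotonically_modular I f <-> horizontal_maxdiff_invariant I f,
      horizontal_maxdiff_invariant I f <-> (exists g : tup R n -> R, represented_by I f g)
    & comonotonically_modular I f -> represented_by I f f].
Proof.
have modular_self : comonotonically_modular I f -> represented_by I f f.
  by move=> /(modular_chain_increments_eq hI) /chain_increments_eq_represented.
have maxdiff_self : horizontal_maxdiff_invariant I f -> represented_by I f f.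
  by move=> /(maxdiff_chain_increments_eq hI) /chain_increments_eq_represented.
split=> //; split.
- by move=> /modular_self; apply: represented_maxdiff_invariant.
- by move=> /maxdiff_self; apply: represented_comonotonically_modular.
- by move=> /maxdiff_self rep; exists f.
- by move=> [g]; apply: represented_maxdiff_invariant.
Qed.
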